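(* Let $V$ be a real sequence with $\liminf_{n\to\infty}V_n>C>0$, fix a positive integer $m$, and let $\varphi^-$ be the subdominant solution of $(-\Delta+V)\varphi=0$. Then, with $K_A:=\sqrt{1+\left(\frac{2}{C(C+2)}\right)^2}+\frac{2}{C(C+2)}$: (a) $\left(\prod_{\ell=m}^n\frac{V_\ell+2}{K_A}\right)\varphi^-_n\in\ell^\infty$ (as a sequence in $n$); (b) if in addition $V_{n+1}-V_n\in\ell^1$, then $\left(\prod_{\ell=m}^n\frac{V_\ell+2+\sqrt{V_\ell(V_\ell+4)}}{2}\right)\varphi^-_n\in\ell^\infty$.
   Context: $(\Delta f)_n=f_{n+1}+f_{n-1}-2f_n$; $(-\Delta+V)\varphi=0$ means $-\varphi_{n+1}-\varphi_{n-1}+(2+V_n)\varphi_n=0$. The subdominant solution is a nonzero solution decreasing to $0$ at infinity (square-summable), unique up to a multiplicative constant. *)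

From Stdlib Require Import Reals.
From Coquelicot Require Import Coquelicot.
Open Scope R_scope.

Fixpoint prod_lt (f : nat -> R) (n : nat) : R :=
  match n with
  | O => 1
  | S k => prod_lt f k * f k
  end.

(* \prod_{l = m}^{n} f l  (empty product = 1 when n < m) *)
Definition prod_range (f : nat -> R) (m n : nat) : R :=
  prod_lt (fun l => if Nat.leb m l then f l else 1) (S n).

(* (-Delta + V) phi = 0 on the half-line: for every n >= 1,
   -phi_{n+1} - phi_{n-1} + (2 + V_n) phi_n = 0 *)
Definition solves (V phi : nat -> R) : Prop :=
  forall n : nat, (1 <= n)%nat ->
    - phi (S n) - phi (pred n) + (2 + V n) * phi n = 0.

Definition l2 (u : nat -> R) : Prop := ex_series (fun n => (u n) ^ 2).

Definition subdominant (V phi : nat -> R) : Prop :=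
  solves V phi /\ (exists n, phi n <> 0) /\ l2 phi.

Definition linf (u : nat -> R) : Prop := exists M : R, forall n, Rabs (u n) <= M.

Definition l1 (u : nat -> R) : Prop := ex_series (fun n => Rabs (u n)).

Definition K_A (C : R) : R :=
  sqrt (1 + (2 / (C * (C + 2))) ^ 2) + 2 / (C * (C + 2)).

(* Eventually [V > C > 0], so a solution whose modulus fails to decrease once
   keeps growing; being square-summable, the subdominant solution therefore
   decreases strictly in modulus from some [N] on, and its ratios
   [r n = phi n / phi (n+1)] satisfy [r n + 1 / r (n+1) = V (n+1) + 2] and
   [r n > 1 + C].  For (a), [V (n+1) + 2 <= K_A C * r n], so the weighted
   modulus is nonincreasing.  For (b), compare [r n] with the larger root
   [lam v] of [x + 1/x = v + 2]: the positive part [d n] of [lam (V (n+1)) - r n]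
   obeys [(1 + C) d n <= |lam (V (n+2)) - lam (V (n+1))| + d (n+1)], and [lam] is
   Lipschitz on [(C, oo)], so [sum d n] is controlled by [sum |V (n+1) - V n|]
   and the weighted modulus grows by at most [exp (sum d n)]. *)

From Stdlib Require Import Reals Lra Lia Psatz.
From Coquelicot Require Import Coquelicot.
Open Scope R_scope.

Lemma le_of_nondecreasing_from (u : nat -> R) (N : nat) :
  (forall k, (N <= k)%nat -> u k <= u (S k)) -> forall k, (N <= k)%nat -> u N <= u k.
Proof.
  intros Hu k Hk. induction Hk as [|k Hk IH]; [lra|].
  specialize (Hu k Hk). lra.
Qed.

Lemma le_of_nonincreasing_from (u : nat -> R) (N : nat) :
  (forall k, (N <= k)%nat -> u (S k) <= u k) -> forall k, (N <= k)%nat -> u k <= u N.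
Proof.
  intros Hu k Hk.
  enough (- u N <= - u k) by lra.
  apply (le_of_nondecreasing_from (fun j => - u j)); [|exact Hk].
  intros j Hj. specialize (Hu j Hj). lra.
Qed.

Lemma linf_of_eventually_bounded (u : nat -> R) (N : nat) (B : R) :
  (forall n, (N <= n)%nat -> Rabs (u n) <= B) -> linf u.
Proof.
  intros HB.
  assert (Hinit : exists M, forall n, (n < N)%nat -> Rabs (u n) <= M).
  { clear HB. induction N as [|N [M HM]].
    - exists 0. intros n Hn. lia.
    - exists (Rmax M (Rabs (u N))). intros n Hn.
      destruct (Nat.eq_dec n N) as [->|Hne]; [apply Rmax_r|].
      eapply Rle_trans; [apply HM; lia | apply Rmax_l]. }
  destruct Hinit as [M HM]. exists (Rmax M B). intros n.
  destruct (Nat.lt_ge_cases n N) as [Hn|Hn].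
  - eapply Rle_trans; [apply HM, Hn | apply Rmax_l].
  - eapply Rle_trans; [apply HB, Hn | apply Rmax_r].
Qed.

Lemma eventually_gt_of_LimInf (u : nat -> R) (c : R) :
  Rbar_lt (Finite c) (LimInf_seq u) -> exists N, forall k, (N <= k)%nat -> c < u k.
Proof.
  intros H. destruct (ex_LimInf_seq u) as [l Hl].
  rewrite (is_LimInf_seq_unique _ _ Hl) in H.
  destruct l as [l| |]; simpl in H.
  - assert (Heps : 0 < l - c) by lra.
    destruct (Hl (mkposreal _ Heps)) as [_ [N HN]].
    exists N. intros k Hk. specialize (HN k Hk). simpl in HN. lra.
  - destruct (Hl c) as [N HN]. exists N. exact HN.
  - contradiction.
Qed.

Lemma ex_series_tail (b : nat -> R) :
  (forall n, 0 <= b n) -> ex_series b ->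
  exists T : nat -> R, (forall n, 0 <= T n) /\ (forall n, T n = b (S n) + T (S n)).
Proof.
  intros Hb Hser. exists (fun n => Series b - sum_n b n). split.
  - intros n. enough (sum_n b n <= Series b) by lra.
    apply (is_lim_seq_incr_compare _ _ (Series_correct _ Hser)).
    intros k. rewrite sum_Sn. specialize (Hb (S k)). unfold plus; simpl. lra.
  - intros n. rewrite sum_Sn. unfold plus; simpl. lra.
Qed.

Lemma abs_prod_range_step (f g : nat -> R) (m n : nat) (c : R) :
  (m <= S n)%nat -> 0 <= f (S n) ->
  Rabs (g (S n)) * f (S n) <= c * Rabs (g n) ->
  Rabs (prod_range f m (S n) * g (S n)) <= c * Rabs (prod_range f m n * g n).
Proof.
  intros Hm Hf Hg.
  change (prod_range f m (S n))
    with (prod_range f m n * (if Nat.leb m (S n) then f (S n) else 1)).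
  replace (Nat.leb m (S n)) with true by (symmetry; apply Nat.leb_le, Hm).
  rewrite !Rabs_mult, (Rabs_pos_eq (f (S n))) by exact Hf.
  pose proof (Rabs_pos (prod_range f m n)).
  replace (c * (Rabs (prod_range f m n) * Rabs (g n)))
    with (Rabs (prod_range f m n) * (c * Rabs (g n))) by ring.
  rewrite Rmult_assoc. apply Rmult_le_compat_l; [assumption|]. lra.
Qed.

Lemma solves_consecutive_zeros (V phi : nat -> R) (n : nat) :
  solves V phi -> phi n = 0 -> phi (S n) = 0 -> forall k, phi k = 0.
Proof.
  intros Hsol.
  assert (Hback : forall j, phi j = 0 -> phi (S j) = 0 -> phi 0%nat = 0 /\ phi 1%nat = 0).
  { intros j. induction j as [|j IH]; intros H0 H1; [split; assumption|].
    apply IH; [|exact H0].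
    specialize (Hsol (S j) ltac:(lia)). simpl in Hsol. rewrite H0, H1 in Hsol. lra. }
  intros H0 H1. destruct (Hback n H0 H1) as [Z0 Z1].
  assert (Hfwd : forall k, phi k = 0 /\ phi (S k) = 0).
  { induction k as [|k [Hk HSk]]; [split; assumption|]. split; [exact HSk|].
    specialize (Hsol (S k) ltac:(lia)). simpl in Hsol. rewrite Hk, HSk in Hsol. lra. }
  intros k. apply Hfwd.
Qed.

Lemma solves_abs_nondecreasing (V phi : nat -> R) (n : nat) :
  solves V phi -> (forall k, (n < k)%nat -> 0 <= V k) ->
  Rabs (phi n) <= Rabs (phi (S n)) ->
  forall k, (n <= k)%nat -> Rabs (phi k) <= Rabs (phi (S k)).
Proof.
  intros Hsol HV Hn k Hk. induction Hk as [|k Hk IH]; [exact Hn|].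
  specialize (Hsol (S k) ltac:(lia)). simpl in Hsol.
  assert (Hrec : phi (S (S k)) = (2 + V (S k)) * phi (S k) - phi k) by lra.
  rewrite Hrec.
  pose proof (Rabs_triang_inv ((2 + V (S k)) * phi (S k)) (phi k)) as Htri.
  specialize (HV (S k) ltac:(lia)).
  rewrite Rabs_mult, (Rabs_pos_eq (2 + V (S k))) in Htri by lra.
  pose proof (Rmult_le_pos _ _ HV (Rabs_pos (phi (S k)))). lra.
Qed.

Lemma subdominant_abs_decreasing (V phi : nat -> R) (N : nat) :
  subdominant V phi -> (forall k, (N <= k)%nat -> 0 <= V k) ->
  forall n, (N <= n)%nat -> Rabs (phi (S n)) < Rabs (phi n).
Proof.
  intros [Hsol [[k Hk] Hl2]] HV n Hn. apply Rnot_le_lt. intros Hle.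
  assert (Hgrow : forall j, Rabs (phi (S n)) <= Rabs (phi (j + S n)%nat)).
  { intros j. apply (le_of_nondecreasing_from (fun i => Rabs (phi i))); [|lia].
    intros i Hi. apply (solves_abs_nondecreasing V phi n); auto; [|lia].
    intros l Hl. apply HV. lia. }
  assert (Hzero : phi (S n) = 0).
  { assert (Hlim : is_lim_seq (fun j => phi (j + S n)%nat ^ 2) 0)
      by exact (proj1 (is_lim_seq_incr_n (fun j => phi j ^ 2) (S n) 0) (ex_series_lim_0 _ Hl2)).
    assert (Hsq : Rbar_le (phi (S n) ^ 2) 0).
    { refine (is_lim_seq_le _ _ _ _ _ (is_lim_seq_const _) Hlim).
      intros j. cbv beta. rewrite <- (pow2_abs (phi (S n))), <- (pow2_abs (phi (j + S n)%nat)).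
      apply pow_incr. split; [apply Rabs_pos | apply Hgrow]. }
    destruct (Req_dec (phi (S n)) 0) as [|Hne]; [assumption|].
    pose proof (pow_nonzero _ 2 Hne). pose proof (pow2_ge_0 (phi (S n))).
    change (phi (S n) ^ 2 <= 0) in Hsq. lra. }
  assert (Hzero' : phi n = 0).
  { rewrite Hzero, Rabs_R0 in Hle. apply Rabs_eq_0. pose proof (Rabs_pos (phi n)). lra. }
  apply Hk. exact (solves_consecutive_zeros V phi n Hsol Hzero' Hzero k).
Qed.

Lemma one_le_K_A (C : R) : 0 < C -> 1 <= K_A C.
Proof.
  intros HC. unfold K_A.
  assert (0 < 2 / (C * (C + 2))) by (apply Rdiv_lt_0_compat; nra).
  assert (1 <= sqrt (1 + (2 / (C * (C + 2))) ^ 2)).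
  { rewrite <- sqrt_1 at 1. apply sqrt_le_1_alt. nra. }
  lra.
Qed.

(* With [t = 2 / (C (C + 2))] one has [K_A C - 1 >= t] and
   [t ((C + 2) (C + 1) - 1) >= 1], which gives [(K_A C - 1) (v + 2 - x) >= x]. *)
Lemma le_K_A_mul (C v x : R) :
  0 < C -> C < v -> 0 < x -> x * (1 + C) < 1 -> v + 2 <= K_A C * (v + 2 - x).
Proof.
  intros HC Hv Hx Hx1. unfold K_A. set (t := 2 / (C * (C + 2))).
  assert (Ht : t * (C * (C + 2)) = 2) by (unfold t; field; lra).
  assert (Ht0 : 0 < t) by (unfold t; apply Rdiv_lt_0_compat; nra).
  assert (Hsqrt : 1 <= sqrt (1 + t ^ 2)).
  { rewrite <- sqrt_1 at 1. apply sqrt_le_1_alt. nra. }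
  set (u := sqrt (1 + t ^ 2) + t - 1).
  replace (sqrt (1 + t ^ 2) + t) with (1 + u) by (unfold u; ring).
  assert (Hut : t <= u) by (unfold u; lra).
  assert (Htc : t * ((C + 2) * (1 + C) - 1) >= 1) by nra.
  assert (Hvc : (v + 2) * (1 + C) - 1 >= (C + 2) * (1 + C) - 1) by nra.
  assert (Hu : u * ((v + 2) * (1 + C) - 1) >= t * ((v + 2) * (1 + C) - 1)) by nra.
  apply (Rmult_le_reg_r (1 + C)); [lra|]. nra.
Qed.

Lemma exp_le_compat (x y : R) : x <= y -> exp x <= exp y.
Proof.
  intros H. destruct (Rle_lt_or_eq_dec _ _ H) as [Hlt | ->]; [|lra].
  apply Rlt_le, exp_increasing, Hlt.
Qed.

Definition lam (v : R) : R := (v + 2 + sqrt (v * (v + 4))) / 2.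

(* [lam' v = (1 + (v + 2) / sqrt (v (v + 4))) / 2] is decreasing on [v > 0]. *)
Definition lam_lip_const (C : R) : R := (1 + (C + 2) / sqrt (C * (C + 4))) / 2.

Lemma lam_ge1_add_inv (v : R) : 0 < v -> 1 <= lam v /\ lam v + / lam v = v + 2.
Proof.
  intros Hv. unfold lam.
  pose proof (sqrt_pos (v * (v + 4))) as Hs0.
  pose proof (sqrt_sqrt (v * (v + 4)) ltac:(nra)) as Hss.
  set (s := sqrt (v * (v + 4))) in *. split; [lra|].
  field_simplify_eq; [nra | lra].
Qed.

Lemma lam_lip_const_nonneg (C : R) : 0 < C -> 0 <= lam_lip_const C.
Proof.
  intros HC. unfold lam_lip_const.
  assert (0 < sqrt (C * (C + 4))) by (apply sqrt_lt_R0; nra).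
  assert (0 <= (C + 2) / sqrt (C * (C + 4))) by (apply Rdiv_le_0_compat; lra).
  lra.
Qed.

Lemma sqrt_mul_plus4_lip (C x y : R) :
  0 < C -> C < x -> C < y ->
  Rabs (sqrt (x * (x + 4)) - sqrt (y * (y + 4))) * sqrt (C * (C + 4))
    <= (C + 2) * Rabs (x - y).
Proof.
  intros HC Hx Hy.
  pose proof (sqrt_sqrt (x * (x + 4)) ltac:(nra)) as Sx.
  pose proof (sqrt_sqrt (y * (y + 4)) ltac:(nra)) as Sy.
  pose proof (sqrt_sqrt (C * (C + 4)) ltac:(nra)) as Sc.
  assert (px : 0 < sqrt (x * (x + 4))) by (apply sqrt_lt_R0; nra).
  assert (py : 0 < sqrt (y * (y + 4))) by (apply sqrt_lt_R0; nra).
  assert (pc : 0 < sqrt (C * (C + 4))) by (apply sqrt_lt_R0; nra).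
  set (sx := sqrt (x * (x + 4))) in *. set (sy := sqrt (y * (y + 4))) in *.
  set (sc := sqrt (C * (C + 4))) in *.
  assert (Hbound : forall v s, C < v -> 0 < s -> s * s = v * (v + 4) -> sc * (v + 2) <= (C + 2) * s).
  { intros v s Hv Hs Hss. apply Rsqr_incr_0_var; [|nra].
    unfold Rsqr. replace (sc * (v + 2) * (sc * (v + 2))) with ((sc * sc) * ((v + 2) * (v + 2))) by ring.
    replace ((C + 2) * s * ((C + 2) * s)) with ((C + 2) * (C + 2) * (s * s)) by ring.
    rewrite Sc, Hss. nra. }
  pose proof (Hbound x sx Hx px Sx). pose proof (Hbound y sy Hy py Sy).
  assert (Hdiff : Rabs (sx - sy) * (sx + sy) = Rabs (x - y) * (x + y + 4)).
  { rewrite <- (Rabs_pos_eq (sx + sy)), <- (Rabs_pos_eq (x + y + 4)) by lra.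
    rewrite <- !Rabs_mult. f_equal. nra. }
  apply (Rmult_le_reg_r (sx + sy)); [lra|].
  pose proof (Rabs_pos (x - y)).
  replace (Rabs (sx - sy) * sc * (sx + sy)) with (Rabs (sx - sy) * (sx + sy) * sc) by ring.
  rewrite Hdiff.
  replace (Rabs (x - y) * (x + y + 4) * sc) with (Rabs (x - y) * (sc * (x + 2) + sc * (y + 2))) by ring.
  replace ((C + 2) * Rabs (x - y) * (sx + sy)) with (Rabs (x - y) * ((C + 2) * sx + (C + 2) * sy)) by ring.
  apply Rmult_le_compat_l; lra.
Qed.

Lemma lam_lipschitz (C x y : R) :
  0 < C -> C < x -> C < y -> Rabs (lam x - lam y) <= lam_lip_const C * Rabs (x - y).
Proof.
  intros HC Hx Hy. unfold lam, lam_lip_const.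
  pose proof (sqrt_mul_plus4_lip C x y HC Hx Hy) as Hs.
  assert (pc : 0 < sqrt (C * (C + 4))) by (apply sqrt_lt_R0; nra).
  assert (Hs' : Rabs (sqrt (x * (x + 4)) - sqrt (y * (y + 4)))
                <= (C + 2) / sqrt (C * (C + 4)) * Rabs (x - y)).
  { apply (Rmult_le_reg_r (sqrt (C * (C + 4)))); [exact pc|].
    replace ((C + 2) / sqrt (C * (C + 4)) * Rabs (x - y) * sqrt (C * (C + 4)))
      with ((C + 2) * Rabs (x - y)) by (field; lra).
    exact Hs. }
  replace ((x + 2 + sqrt (x * (x + 4))) / 2 - (y + 2 + sqrt (y * (y + 4))) / 2)
    with (((x - y) + (sqrt (x * (x + 4)) - sqrt (y * (y + 4)))) / 2) by field.
  rewrite Rabs_div, (Rabs_pos_eq 2) by lra.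
  pose proof (Rabs_triang (x - y) (sqrt (x * (x + 4)) - sqrt (y * (y + 4)))).
  lra.
Qed.

Definition ratio (phi : nat -> R) (k : nat) : R := phi k / phi (S k).

Section DecayingSolution.

Variables (V phi : nat -> R) (C : R) (N : nat).
Hypothesis HC : 0 < C.
Hypothesis Hsol : solves V phi.
Hypothesis HV : forall k, (N <= k)%nat -> C < V k.
Hypothesis Hdec : forall k, (N <= k)%nat -> Rabs (phi (S k)) < Rabs (phi k).

Lemma phi_neq0 (k : nat) : (N <= k)%nat -> phi k <> 0.
Proof.
  intros Hk Hz. specialize (Hdec k Hk). rewrite Hz, Rabs_R0 in Hdec.
  pose proof (Rabs_pos (phi (S k))). lra.
Qed.

Lemma abs_phi_ratio (k : nat) :
  (N <= k)%nat -> Rabs (phi k) = Rabs (ratio phi k) * Rabs (phi (S k)).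
Proof.
  intros Hk. rewrite <- Rabs_mult. unfold ratio. f_equal. field. apply phi_neq0. lia.
Qed.

Lemma abs_inv_ratio_lt1 (k : nat) : (N <= k)%nat -> Rabs (/ ratio phi k) < 1.
Proof.
  intros Hk. unfold ratio. rewrite Rinv_div, Rabs_div by (apply phi_neq0; lia).
  pose proof (Rabs_pos_lt _ (phi_neq0 k Hk)).
  apply (Rmult_lt_reg_r (Rabs (phi k))); [assumption|].
  unfold Rdiv. rewrite Rmult_assoc, Rinv_l, Rmult_1_r, Rmult_1_l by lra. apply Hdec, Hk.
Qed.

Lemma ratio_add_inv (k : nat) :
  (N <= k)%nat -> ratio phi k + / ratio phi (S k) = V (S k) + 2.
Proof.
  intros Hk. pose proof (Hsol (S k) ltac:(lia)) as Hrec. simpl pred in Hrec.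
  pose proof (phi_neq0 (S k) ltac:(lia)).
  unfold ratio. rewrite Rinv_div.
  replace (phi k / phi (S k) + phi (S (S k)) / phi (S k))
    with ((phi k + phi (S (S k))) / phi (S k)) by (field; assumption).
  replace (phi k + phi (S (S k))) with ((V (S k) + 2) * phi (S k)) by lra.
  field. assumption.
Qed.

Lemma ratio_gt (k : nat) : (N <= k)%nat -> 1 + C < ratio phi k.
Proof.
  intros Hk. pose proof (ratio_add_inv k Hk).
  pose proof (Rle_abs (/ ratio phi (S k))). pose proof (abs_inv_ratio_lt1 (S k) ltac:(lia)).
  pose proof (HV (S k) ltac:(lia)). lra.
Qed.

Lemma abs_phi_step_K_A (n : nat) :
  (N <= n)%nat -> Rabs (phi (S n)) * ((V (S n) + 2) / K_A C) <= 1 * Rabs (phi n).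
Proof.
  intros Hn. rewrite Rmult_1_l, (abs_phi_ratio n Hn).
  pose proof (ratio_gt n Hn) as Hr. pose proof (ratio_gt (S n) ltac:(lia)) as Hr1.
  rewrite (Rabs_pos_eq (ratio phi n)) by lra.
  pose proof (one_le_K_A C HC) as HK.
  assert (HKA : V (S n) + 2 <= K_A C * ratio phi n).
  { replace (ratio phi n) with (V (S n) + 2 - / ratio phi (S n))
      by (pose proof (ratio_add_inv n Hn); lra).
    apply le_K_A_mul; [exact HC | apply HV; lia | apply Rinv_0_lt_compat; lra |].
    apply (Rmult_lt_reg_r (ratio phi (S n))); [lra|].
    replace (/ ratio phi (S n) * (1 + C) * ratio phi (S n)) with (1 + C) by (field; lra).
    lra. }
  pose proof (Rabs_pos (phi (S n))).
  unfold Rdiv. apply (Rmult_le_reg_r (K_A C)); [lra|].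
  rewrite !Rmult_assoc, Rinv_l, Rmult_1_r by lra. nra.
Qed.

Lemma prod_K_A_phi_bounded (m : nat) :
  (m <= N)%nat -> linf (fun n => prod_range (fun l => (V l + 2) / K_A C) m n * phi n).
Proof.
  intros Hm. set (f := fun l => (V l + 2) / K_A C).
  apply (linf_of_eventually_bounded _ N (Rabs (prod_range f m N * phi N))).
  refine (le_of_nonincreasing_from (fun n => Rabs (prod_range f m n * phi n)) N _).
  intros n Hn. rewrite <- (Rmult_1_l (Rabs (prod_range f m n * phi n))).
  apply abs_prod_range_step; [lia | | apply abs_phi_step_K_A, Hn].
  unfold f. apply Rdiv_le_0_compat; [pose proof (HV (S n) ltac:(lia)); lra|].
  pose proof (one_le_K_A C HC). lra.
Qed.

Let dev (n : nat) : R := Rmax 0 (lam (V (S n)) - ratio phi n).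

Lemma lam_V_ge1_add_inv (k : nat) :
  (N <= k)%nat -> 1 <= lam (V k) /\ lam (V k) + / lam (V k) = V k + 2.
Proof. intros Hk. apply lam_ge1_add_inv. pose proof (HV k Hk). lra. Qed.

Lemma lam_sub_ratio (n : nat) :
  (N <= n)%nat -> lam (V (S n)) - ratio phi n = / ratio phi (S n) - / lam (V (S n)).
Proof.
  intros Hn. pose proof (ratio_add_inv n Hn).
  pose proof (lam_V_ge1_add_inv (S n) ltac:(lia)). lra.
Qed.

Lemma dev_le1 (n : nat) : (N <= n)%nat -> dev n <= 1.
Proof.
  intros Hn. unfold dev. apply Rmax_lub; [lra|]. rewrite lam_sub_ratio by exact Hn.
  pose proof (Rle_abs (/ ratio phi (S n))). pose proof (abs_inv_ratio_lt1 (S n) ltac:(lia)).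
  destruct (lam_V_ge1_add_inv (S n) ltac:(lia)) as [Hl _].
  pose proof (Rinv_0_lt_compat (lam (V (S n))) ltac:(lra)). lra.
Qed.

Lemma abs_phi_step_lam (n : nat) :
  (N <= n)%nat -> Rabs (phi (S n)) * lam (V (S n)) <= (1 + dev n) * Rabs (phi n).
Proof.
  intros Hn. rewrite (abs_phi_ratio n Hn).
  pose proof (ratio_gt n Hn) as Hr. rewrite (Rabs_pos_eq (ratio phi n)) by lra.
  assert (Hl : lam (V (S n)) <= (1 + dev n) * ratio phi n).
  { pose proof (Rmax_r 0 (lam (V (S n)) - ratio phi n)).
    pose proof (Rmax_l 0 (lam (V (S n)) - ratio phi n)).
    fold (dev n) in *. nra. }
  pose proof (Rabs_pos (phi (S n))). nra.
Qed.

(* [lam - ratio n = (lam - ratio (n+1)) / (lam ratio (n+1))], and the denominator exceeds [1 + C]. *)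
Lemma dev_contract (n : nat) :
  (N <= n)%nat ->
  (1 + C) * dev n <= Rabs (lam (V (S (S n))) - lam (V (S n))) + dev (S n).
Proof.
  intros Hn. pose proof (lam_sub_ratio n Hn) as Hsub.
  set (l := lam (V (S n))) in *. set (r1 := ratio phi (S n)) in *.
  destruct (lam_V_ge1_add_inv (S n) ltac:(lia)) as [Hl _]. fold l in Hl.
  pose proof (ratio_gt (S n) ltac:(lia)) as Hr1. fold r1 in Hr1.
  assert (Hnext : l - r1 <= Rabs (lam (V (S (S n))) - l) + dev (S n)).
  { pose proof (Rmax_r 0 (lam (V (S (S n))) - r1)).
    pose proof (Rabs_maj2 (lam (V (S (S n))) - l)). unfold dev. fold r1. lra. }
  assert (Hrest : 0 <= Rabs (lam (V (S (S n))) - l) + dev (S n)).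
  { pose proof (Rabs_pos (lam (V (S (S n))) - l)). pose proof (Rmax_l 0 (lam (V (S (S n))) - ratio phi (S n))).
    unfold dev. lra. }
  unfold dev at 1. fold l. apply Rmax_case_strong; intros Hcase; [lra|].
  rewrite Hsub.
  replace (/ r1 - / l) with ((l - r1) * / (l * r1)) by (field; lra).
  assert (Hw : (1 + C) * / (l * r1) <= 1).
  { apply (Rmult_le_reg_r (l * r1)); [nra|].
    rewrite Rmult_assoc, Rinv_l, Rmult_1_r, Rmult_1_l by nra. nra. }
  assert (Hpos : 0 <= l - r1).
  { rewrite Hsub in Hcase.
    apply Rnot_lt_le. intros Hlt.
    assert (/ r1 < / l) by (apply Rinv_lt_contravar; nra). lra. }
  replace ((1 + C) * ((l - r1) * / (l * r1))) with ((l - r1) * ((1 + C) * / (l * r1))) by ring.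
  pose proof (Rmult_le_compat_l _ _ _ Hpos Hw). lra.
Qed.

Lemma prod_lam_phi_bounded (m : nat) :
  (m <= N)%nat -> l1 (fun n => V (S n) - V n) ->
  linf (fun n => prod_range (fun l => lam (V l)) m n * phi n).
Proof.
  intros Hm Hl1.
  destruct (ex_series_tail (fun n => Rabs (V (S n) - V n)) (fun n => Rabs_pos _) Hl1)
    as [T [HT0 HTS]].
  pose proof (lam_lip_const_nonneg C HC) as HL. set (L := lam_lip_const C) in *.
  set (Q := fun n => Rabs (prod_range (fun l => lam (V l)) m n * phi n)).
  (* [Q n * exp (w n)] is a nonincreasing potential: the tail sums [T] pay for the deviations. *)
  set (w := fun n => (L * T n - dev n) / C).
  assert (Hw : forall n, (N <= n)%nat -> dev n + w (S n) <= w n).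
  { intros n Hn.
    pose proof (dev_contract n Hn) as Hc.
    pose proof (lam_lipschitz C (V (S (S n))) (V (S n)) HC (HV (S (S n)) ltac:(lia)) (HV (S n) ltac:(lia))) as Hlip.
    fold L in Hlip.
    assert (HLT : L * T n = L * Rabs (V (S (S n)) - V (S n)) + L * T (S n)) by (rewrite (HTS n); ring).
    unfold w, Rdiv. apply (Rmult_le_reg_r C); [exact HC|].
    rewrite Rmult_plus_distr_r, !Rmult_assoc, !Rinv_l, !Rmult_1_r by lra. lra. }
  assert (Hmono : forall n, (N <= n)%nat -> Q (S n) * exp (w (S n)) <= Q n * exp (w n)).
  { intros n Hn.
    assert (HQ : Q (S n) <= (1 + dev n) * Q n).
    { apply abs_prod_range_step; [lia | | apply abs_phi_step_lam, Hn].
      destruct (lam_V_ge1_add_inv (S n) ltac:(lia)). lra. }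
    assert (Hexp : (1 + dev n) * Q n <= exp (dev n) * Q n).
    { apply Rmult_le_compat_r; [apply Rabs_pos | apply exp_ineq1_le]. }
    pose proof (exp_pos (w (S n))).
    apply Rle_trans with (Q n * exp (dev n + w (S n))).
    - rewrite exp_plus. nra.
    - apply Rmult_le_compat_l; [apply Rabs_pos | apply exp_le_compat, Hw, Hn]. }
  apply (linf_of_eventually_bounded _ N (Q N * exp (w N) * exp (/ C))).
  intros n Hn. change (Q n <= Q N * exp (w N) * exp (/ C)).
  pose proof (le_of_nonincreasing_from (fun n => Q n * exp (w n)) N Hmono n Hn) as Hle.
  assert (Hwn : - w n <= / C).
  { unfold w, Rdiv. pose proof (dev_le1 n Hn). pose proof (HT0 n).
    pose proof (Rinv_0_lt_compat C HC).
    replace (- ((L * T n - dev n) * / C)) with ((dev n - L * T n) * / C) by ring.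
    pose proof (Rmult_le_pos _ _ HL (HT0 n)).
    apply Rle_trans with (1 * / C); [apply Rmult_le_compat_r; lra | lra]. }
  replace (Q n) with (Q n * exp (w n) * exp (- w n)) by (rewrite Rmult_assoc, <- exp_plus, Rplus_opp_r, exp_0; ring).
  apply Rmult_le_compat; [| apply Rlt_le, exp_pos | exact Hle | apply exp_le_compat, Hwn].
  apply Rmult_le_pos; [apply Rabs_pos | apply Rlt_le, exp_pos].
Qed.

End DecayingSolution.

Theorem corollary5 (V : nat -> R) (C : R) (m : nat) (phi : nat -> R) :
  0 < C ->
  Rbar_lt (Finite C) (LimInf_seq V) ->
  (1 <= m)%nat ->
  subdominant V phi ->
  linf (fun n => prod_range (fun l => (V l + 2) / K_A C) m n * phi n)
  /\
  (l1 (fun n => V (S n) - V n) ->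
   linf (fun n => prod_range
                    (fun l => (V l + 2 + sqrt (V l * (V l + 4))) / 2) m n
                  * phi n)).
Proof.
  intros HC HL _ Hsub.
  destruct (eventually_gt_of_LimInf V C HL) as [N HV].
  assert (Hdec : forall k, (N <= k)%nat -> Rabs (phi (S k)) < Rabs (phi k)).
  { apply (subdominant_abs_decreasing V phi N Hsub).
    intros k Hk. pose proof (HV k Hk). lra. }
  destruct Hsub as [Hsol _].
  set (N' := (N + m)%nat).
  assert (HV' : forall k, (N' <= k)%nat -> C < V k) by (intros k Hk; apply HV; lia).
  assert (Hdec' : forall k, (N' <= k)%nat -> Rabs (phi (S k)) < Rabs (phi k))
    by (intros k Hk; apply Hdec; lia).
  split.
  - apply (prod_K_A_phi_bounded V phi C N'); auto; lia.
  - apply (prod_lam_phi_bounded V phi C N'); auto; lia.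
Qed.
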